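(* Let $X$ be a real Hilbert space, $\mathsf{A}:X\to 2^X$ a maximal monotone operator whose zero set $S$ is nonempty, and $J:=(Id+\mathsf{A})^{-1}$. Let $x_0\in X$, $p\in S$ and $N\in\mathbb{N}\setminus\{0\}$ with $N\geq 2\|x_0-p\|$. For every $k\in\mathbb{N}$ and every monotone function $f:\mathbb{N}\to\mathbb{N}$ there exist $n\leq 24N\big(w_{f,N}^{(R)}(0)+1\big)^2$ and $x\in B_N$ such that $$\|J(x)-x\|\leq\frac{1}{f(n)+1}\quad\text{and}\quad\forall y\in B_N\ \left(\|J(y)-y\|\leq\frac{1}{n+1}\ \to\ \langle x_0-x,\,y-x\rangle\leq\frac{1}{k+1}\right),$$ where $R:=4N^4(k+1)^2$ and $w_{f,N}(m):=\max\{f(24N(m+1)^2),\,24N(m+1)^2\}$.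
   Context: $S:=\{x\in X: 0\in\mathsf{A}(x)\}$. The resolvent $J=(Id+\mathsf A)^{-1}$ is a single-valued nonexpansive map on $X$ whose fixed point set is $S$. $B_N:=\{x\in X:\ \|x-p\|\leq N\}$. A function $f:\mathbb{N}\to\mathbb{N}$ is monotone if $f(n)\leq f(n+1)$ for all $n$. $g^{(R)}$ is the $R$-fold composition of $g$ with itself ($g^{(0)}$ the identity). *)

From Stdlib Require Import Reals Lra.
Open Scope R_scope.

Record HilbertSpace := {
  carrier :> Type;
  hzero : carrier;
  hadd : carrier -> carrier -> carrier;
  hopp : carrier -> carrier;
  hscal : R -> carrier -> carrier;
  hinner : carrier -> carrier -> R;
  hadd_assoc : forall x y z, hadd x (hadd y z) = hadd (hadd x y) z;
  hadd_comm : forall x y, hadd x y = hadd y x;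
  hadd_0 : forall x, hadd x hzero = x;
  hadd_opp : forall x, hadd x (hopp x) = hzero;
  hscal_assoc : forall a b x, hscal a (hscal b x) = hscal (a * b) x;
  hscal_1 : forall x, hscal 1 x = x;
  hscal_distr_vec : forall a x y, hscal a (hadd x y) = hadd (hscal a x) (hscal a y);
  hscal_distr_scal : forall a b x, hscal (a + b) x = hadd (hscal a x) (hscal b x);
  hinner_sym : forall x y, hinner x y = hinner y x;
  hinner_add_l : forall x y z, hinner (hadd x y) z = hinner x z + hinner y z;
  hinner_scal_l : forall a x y, hinner (hscal a x) y = a * hinner x y;
  hinner_nonneg : forall x, 0 <= hinner x x;
  hinner_def : forall x, hinner x x = 0 -> x = hzero;
  hcomplete : forall u : nat -> carrier,
    (forall eps, 0 < eps -> exists M, forall m n, (M <= m)%nat -> (M <= n)%nat ->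
        sqrt (hinner (hadd (u m) (hopp (u n))) (hadd (u m) (hopp (u n)))) < eps) ->
    exists l, forall eps, 0 < eps -> exists M, forall n, (M <= n)%nat ->
        sqrt (hinner (hadd (u n) (hopp l)) (hadd (u n) (hopp l))) < eps
}.

Arguments hzero {_}. Arguments hadd {_}. Arguments hopp {_}.
Arguments hscal {_}. Arguments hinner {_}.

Definition hsub {X : HilbertSpace} (x y : X) : X := hadd x (hopp y).
Definition hnorm {X : HilbertSpace} (x : X) : R := sqrt (hinner x x).

(** A set-valued operator A : X -> 2^X, encoded as a relation: A x u means u ∈ A(x). *)
Definition SetOp (X : HilbertSpace) := X -> X -> Prop.

Definition monotone_op {X : HilbertSpace} (A : SetOp X) : Prop :=
  forall x y u v, A x u -> A y v -> 0 <= hinner (hsub x y) (hsub u v).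

Definition maximal_monotone {X : HilbertSpace} (A : SetOp X) : Prop :=
  monotone_op A /\
  forall x u, (forall y v, A y v -> 0 <= hinner (hsub x y) (hsub u v)) -> A x u.

Definition zeros {X : HilbertSpace} (A : SetOp X) (x : X) : Prop := A x hzero.

(** J is the resolvent (Id + A)^{-1}: x ∈ J(x) + A(J(x)), i.e. x - J x ∈ A (J x).
    For maximal monotone A this determines J uniquely as a total function. *)
Definition is_resolvent {X : HilbertSpace} (A : SetOp X) (J : X -> X) : Prop :=
  forall x, A (J x) (hsub x (J x)).

Definition in_ball {X : HilbertSpace} (p : X) (N : nat) (x : X) : Prop :=
  hnorm (hsub x p) <= INR N.

Definition monotone_fun (f : nat -> nat) : Prop := forall n, (f n <= f (S n))%nat.

Definition w_fun (f : nat -> nat) (N : nat) (m : nat) : nat :=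
  Nat.max (f (24 * N * (m + 1) ^ 2)%nat) (24 * N * (m + 1) ^ 2)%nat.

From Stdlib Require Import Reals Lra Lia Classical.
Open Scope R_scope.

(* Start at the zero [p], where [J] has no residual, and try to certify the
   current point [x]: either [<x0 - x, y - x> <= 1/(k+1)] for every [y] of the
   ball with residual at most [1/(n+1)], or some such [y] violates it.  In the
   latter case [z = x + t (y - x)] with [t = 1/(4N^2(k+1))] is closer to [x0],
   [|x0 - z|^2 <= |x0 - x|^2 - 1/(4N^2(k+1)^2)], and nonexpansiveness of [J]
   keeps the residual of [z] small, at a precision one iterate of [w_{f,N}]
   coarser.  As [|x0 - p|^2 <= N^2/4], fewer than [R = 4N^4(k+1)^2] descents
   are possible, so running the precisions [w^(R)(0), ..., w(0)] backwards
   produces a certified point before they are exhausted. *)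

Section InnerProduct.

Context {X : HilbertSpace}.

Definition hnorm2 (v : X) : R := hinner v v.

Lemma hinner0l (y : X) : hinner hzero y = 0.
Proof. pose proof (hinner_add_l X hzero hzero y) as H. rewrite hadd_0 in H. lra. Qed.

Lemma hinner0r (y : X) : hinner y hzero = 0.
Proof. rewrite hinner_sym. apply hinner0l. Qed.

Lemma hinner_opp_l (x y : X) : hinner (hopp x) y = - hinner x y.
Proof.
  pose proof (hinner_add_l X x (hopp x) y) as H.
  rewrite hadd_opp, hinner0l in H. lra.
Qed.

Lemma hinner_add_r (x y z : X) : hinner x (hadd y z) = hinner x y + hinner x z.
Proof. rewrite !(hinner_sym X x), hinner_add_l. reflexivity. Qed.

Lemma hinner_opp_r (x y : X) : hinner x (hopp y) = - hinner x y.
Proof. rewrite !(hinner_sym X x). apply hinner_opp_l. Qed.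

Lemma hinner_scal_r a (x y : X) : hinner x (hscal a y) = a * hinner x y.
Proof. rewrite !(hinner_sym X x). apply hinner_scal_l. Qed.

Lemma hnorm2_ge0 (v : X) : 0 <= hnorm2 v.
Proof. apply hinner_nonneg. Qed.

Lemma hnorm2_le_of_hnorm_le (v : X) c : hnorm v <= c -> hnorm2 v <= c ^ 2.
Proof.
  unfold hnorm, hnorm2. intros H.
  pose proof (hinner_nonneg X v). pose proof (sqrt_pos (hinner v v)).
  rewrite <- (sqrt_sqrt (hinner v v)) by lra. nra.
Qed.

Lemma hnorm_le_of_hnorm2_le (v : X) c : 0 <= c -> hnorm2 v <= c ^ 2 -> hnorm v <= c.
Proof. intros Hc H. unfold hnorm. rewrite <- (sqrt_pow2 c Hc). now apply sqrt_le_1_alt. Qed.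

End InnerProduct.

Ltac hinner_sym_step a b :=
  assert_fails (constr_eq a b);
  match goal with
  | |- context [hinner b a] => idtac
  | _ : context [hinner b a] |- _ => idtac
  end;
  rewrite (hinner_sym _ b a) in *.

(* Expands inner products of sums, differences and multiples, and orients
   every pair [hinner a b], [hinner b a] the same way, so that [ring], [lra] or
   [nra] can finish. *)
Ltac hinner_expand :=
  unfold hsub, hnorm2 in *;
  repeat progress rewrite ?hinner_add_l, ?hinner_add_r, ?hinner_opp_l, ?hinner_opp_r,
    ?hinner_scal_l, ?hinner_scal_r, ?hinner0l, ?hinner0r in *;
  repeat match goal with
  | |- context [hinner ?a ?b] => hinner_sym_step a b
  | _ : context [hinner ?a ?b] |- _ => hinner_sym_step a b
  end.

Definition hsegment {X : HilbertSpace} (x y : X) (t : R) : X := hadd x (hscal t (hsub y x)).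

Section Identities.

Context {X : HilbertSpace}.
Implicit Types u v w x y : X.

Lemma hnorm2_sub_diag u : hnorm2 (hsub u u) = 0.
Proof. hinner_expand. ring. Qed.

Lemma hnorm2_sub_sym u v : hnorm2 (hsub u v) = hnorm2 (hsub v u).
Proof. hinner_expand. ring. Qed.

Lemma hnorm2_sub_chain u v w : hnorm2 (hadd (hsub u v) (hsub v w)) = hnorm2 (hsub u w).
Proof. hinner_expand. ring. Qed.

Lemma hnorm2_sub_le u v w : hnorm2 (hsub u v) <= 2 * hnorm2 (hsub u w) + 2 * hnorm2 (hsub v w).
Proof. pose proof (hinner_nonneg X (hadd (hsub u w) (hsub v w))). hinner_expand. lra. Qed.

Lemma hnorm2_add_le (a b : X) s :
  0 < s -> hnorm2 (hadd a b) <= (1 + s) * hnorm2 a + (1 + / s) * hnorm2 b.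
Proof.
  intros Hs. pose proof (hnorm2_ge0 (hsub (hscal s a) b)) as H.
  hinner_expand.
  assert (2 * hinner a b <= s * hinner a a + / s * hinner b b).
  { apply (Rmult_le_reg_l s); [lra|].
    replace (s * (s * hinner a a + / s * hinner b b))
      with (s * (s * hinner a a) + hinner b b) by (field; lra).
    lra. }
  lra.
Qed.

Lemma hnorm2_sub_hsegment w x y t :
  hnorm2 (hsub w (hsegment x y t)) =
  (1 - t) * hnorm2 (hsub w x) + t * hnorm2 (hsub w y) - t * (1 - t) * hnorm2 (hsub y x).
Proof. unfold hsegment. hinner_expand. ring. Qed.

Lemma hnorm2_sub_hsegment_inner w x y t :
  hnorm2 (hsub w (hsegment x y t)) =
  hnorm2 (hsub w x) - 2 * t * hinner (hsub w x) (hsub y x) + t ^ 2 * hnorm2 (hsub y x).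
Proof. unfold hsegment. hinner_expand. ring. Qed.

Lemma hnorm2_hsegment_sub_l x y t :
  hnorm2 (hsub (hsegment x y t) x) = t ^ 2 * hnorm2 (hsub y x).
Proof. unfold hsegment. hinner_expand. ring. Qed.

Lemma hnorm2_hsegment_sub_r x y t :
  hnorm2 (hsub (hsegment x y t) y) = (1 - t) ^ 2 * hnorm2 (hsub y x).
Proof. unfold hsegment. hinner_expand. ring. Qed.

End Identities.

Section Resolvent.

Context {X : HilbertSpace} (A : SetOp X) (J : X -> X).
Hypotheses (hmon : monotone_op A) (hJ : is_resolvent A J).

Lemma resolvent_nonexpansive u v : hnorm2 (hsub (J u) (J v)) <= hnorm2 (hsub u v).
Proof.
  pose proof (hmon _ _ _ _ (hJ u) (hJ v)) as H.
  pose proof (hnorm2_ge0 (hsub (hsub u (J u)) (hsub v (J v)))).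
  hinner_expand. lra.
Qed.

Lemma resolvent_zero_residual q : zeros A q -> hnorm (hsub (J q) q) = 0.
Proof.
  intros hq. pose proof (hmon _ _ _ _ (hJ q) hq) as H.
  pose proof (hnorm2_ge0 (hsub (J q) q)).
  assert (Hres : hnorm2 (hsub (J q) q) = 0) by (hinner_expand; lra).
  unfold hnorm. fold (hnorm2 (hsub (J q) q)). rewrite Hres. apply sqrt_0.
Qed.

Lemma hnorm2_sub_resolvent_le e z x : 0 < e -> hnorm2 (hsub (J x) x) <= e ^ 2 ->
  hnorm2 (hsub (J z) x) <= (1 + e) * hnorm2 (hsub z x) + e ^ 2 + e.
Proof.
  intros He Hx. rewrite <- (hnorm2_sub_chain (J z) (J x) x).
  eapply Rle_trans; [apply (hnorm2_add_le _ _ e He)|].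
  pose proof (resolvent_nonexpansive z x).
  assert ((1 + / e) * e ^ 2 = e ^ 2 + e) by (field; lra).
  assert (0 < / e) by (now apply Rinv_0_lt_compat).
  nra.
Qed.

Lemma resolvent_residual_hsegment x y t e : 0 < e -> 0 <= t <= 1 ->
  hnorm2 (hsub (J x) x) <= e ^ 2 -> hnorm2 (hsub (J y) y) <= e ^ 2 ->
  hnorm2 (hsub (J (hsegment x y t)) (hsegment x y t)) <= e * (t * hnorm2 (hsub y x)) + e ^ 2 + e.
Proof.
  intros He Ht Hx Hy.
  rewrite hnorm2_sub_hsegment.
  pose proof (hnorm2_sub_resolvent_le e (hsegment x y t) x He Hx) as Bx.
  pose proof (hnorm2_sub_resolvent_le e (hsegment x y t) y He Hy) as By.
  rewrite hnorm2_hsegment_sub_l in Bx. rewrite hnorm2_hsegment_sub_r in By.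
  pose proof (hnorm2_ge0 (hsub y x)) as HD.
  set (D := hnorm2 (hsub y x)) in *.
  apply (Rmult_le_compat_l (1 - t)) in Bx; [|lra].
  apply (Rmult_le_compat_l t) in By; [|lra].
  (* the weighted bounds add up to e t (1 - t) D + e^2 + e *)
  assert (0 <= e * t * t * D) by (repeat apply Rmult_le_pos; lra).
  nra.
Qed.

End Resolvent.

Lemma hsegment_in_ball {X : HilbertSpace} (p x y : X) N t :
  0 <= t <= 1 -> in_ball p N x -> in_ball p N y -> in_ball p N (hsegment x y t).
Proof.
  unfold in_ball. intros Ht Hx Hy.
  apply hnorm2_le_of_hnorm_le in Hx, Hy.
  apply hnorm_le_of_hnorm2_le; [apply pos_INR|].
  rewrite hnorm2_sub_sym, hnorm2_sub_hsegment, !(hnorm2_sub_sym p).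
  pose proof (hnorm2_ge0 (hsub y x)).
  assert (0 <= t * (1 - t) * hnorm2 (hsub y x)) by (repeat apply Rmult_le_pos; lra).
  nra.
Qed.

Lemma hnorm2_sub_le_of_in_ball {X : HilbertSpace} (p x y : X) N :
  in_ball p N x -> in_ball p N y -> hnorm2 (hsub y x) <= 4 * INR N ^ 2.
Proof.
  unfold in_ball. intros Hx Hy.
  apply hnorm2_le_of_hnorm_le in Hx, Hy.
  pose proof (hnorm2_sub_le y x p). lra.
Qed.

Lemma hnorm2_sub_hsegment_descent {X : HilbertSpace} (w x y : X) c D :
  0 <= c -> 0 < D -> c <= hinner (hsub w x) (hsub y x) -> hnorm2 (hsub y x) <= D ->
  hnorm2 (hsub w (hsegment x y (c / D))) <= hnorm2 (hsub w x) - c ^ 2 / D.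
Proof.
  intros Hc HD Hi Hyx. rewrite hnorm2_sub_hsegment_inner.
  assert (Ht : 0 <= c / D) by (unfold Rdiv; apply Rmult_le_pos; [lra|left; now apply Rinv_0_lt_compat]).
  assert (Hsq : (c / D) ^ 2 * D = c ^ 2 / D) by (field; lra).
  assert (c / D * c = c ^ 2 / D) by (field; lra).
  assert (0 <= (c / D) ^ 2) by apply pow2_ge_0.
  nra.
Qed.

Lemma one_div_INR_succ_le m n : (m <= n)%nat -> 1 / (INR n + 1) <= 1 / (INR m + 1).
Proof.
  intros Hmn. apply le_INR in Hmn. pose proof (pos_INR m).
  unfold Rdiv. rewrite !Rmult_1_l. apply Rinv_le_contravar; lra.
Qed.

Lemma one_div_INR_succ_bounds n : 0 < 1 / (INR n + 1) <= 1.
Proof.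
  split; [apply Rdiv_lt_0_compat; [lra|pose proof (pos_INR n); lra]|].
  eapply Rle_trans; [apply (one_div_INR_succ_le 0); lia|].
  simpl. lra.
Qed.

Definition rate (N m : nat) : nat := 24 * N * (m + 1) ^ 2.

Lemma w_fun_rate f N m : w_fun f N m = Nat.max (f (rate N m)) (rate N m).
Proof. reflexivity. Qed.

Lemma rate_inv_le N m : (N <> 0)%nat -> 3 * (1 / (INR (rate N m) + 1)) <= (1 / (INR m + 1)) ^ 2.
Proof.
  intros HN.
  assert (Hnat : (3 * (m + 1) ^ 2 <= rate N m + 1)%nat) by (unfold rate; nia).
  apply le_INR in Hnat. rewrite mult_INR, pow_INR, !plus_INR in Hnat.
  replace (INR 3) with 3 in Hnat by (simpl; lra). simpl (INR 1) in Hnat.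
  pose proof (pos_INR m). pose proof (pos_INR (rate N m)).
  replace ((1 / (INR m + 1)) ^ 2) with (/ ((INR m + 1) ^ 2)) by (field; lra).
  replace (3 * (1 / (INR (rate N m) + 1))) with (/ ((INR (rate N m) + 1) / 3)) by (field; lra).
  apply Rinv_le_contravar; nra.
Qed.

Lemma le_w_fun f N m : (N <> 0)%nat -> (m <= w_fun f N m)%nat.
Proof.
  intros HN. rewrite w_fun_rate.
  apply (Nat.le_trans _ (rate N m)); [unfold rate; simpl; nia|apply Nat.le_max_r].
Qed.

Section Descent.

Context {X : HilbertSpace} (A : SetOp X) (J : X -> X) (x0 p : X) (N k : nat) (f : nat -> nat).
Hypotheses (hmon : monotone_op A) (hJ : is_resolvent A J) (hN0 : (N <> 0)%nat).

Local Notation M i := (Nat.iter i (w_fun f N) 0%nat).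
Local Notation margin := (1 / (INR k + 1)).
Local Notation diam2 := (4 * INR N ^ 2).

Definition approx_solution (n : nat) (x : X) : Prop :=
  in_ball p N x /\ hnorm (hsub (J x) x) <= 1 / (INR (f n) + 1) /\
  (forall y, in_ball p N y -> hnorm (hsub (J y) y) <= 1 / (INR n + 1) ->
     hinner (hsub x0 x) (hsub y x) <= margin).

Lemma INR_N_ge1 : 1 <= INR N.
Proof. apply (le_INR 1). lia. Qed.

Lemma margin_le_diam2 : 0 < margin <= diam2.
Proof.
  pose proof (one_div_INR_succ_bounds k). pose proof INR_N_ge1.
  assert (1 <= INR N ^ 2) by nra.
  lra.
Qed.

Lemma step_bounds : 0 < margin / diam2 <= 1.
Proof.
  pose proof margin_le_diam2 as [Hc HcD].
  split; [apply Rdiv_lt_0_compat; lra|].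
  apply (Rmult_le_reg_r diam2); [lra|].
  unfold Rdiv. rewrite Rmult_assoc, Rinv_l; lra.
Qed.

Lemma hsegment_residual m x y :
  in_ball p N x -> in_ball p N y ->
  hnorm (hsub (J x) x) <= 1 / (INR (rate N m) + 1) ->
  hnorm (hsub (J y) y) <= 1 / (INR (rate N m) + 1) ->
  hnorm (hsub (J (hsegment x y (margin / diam2))) (hsegment x y (margin / diam2)))
    <= 1 / (INR m + 1).
Proof.
  intros Hx Hy Hrx Hry.
  pose proof margin_le_diam2. pose proof step_bounds.
  pose proof (one_div_INR_succ_bounds k) as Hc.
  pose proof (one_div_INR_succ_bounds (rate N m)) as He.
  pose proof (rate_inv_le N m hN0) as Hrate.
  set (e := 1 / (INR (rate N m) + 1)) in *.
  assert (Htyx : margin / diam2 * hnorm2 (hsub y x) <= 1).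
  { pose proof (hnorm2_sub_le_of_in_ball p x y N Hx Hy).
    pose proof INR_N_ge1. pose proof (pos_INR k).
    assert (margin / diam2 * diam2 = margin) by (field; split; lra).
    nra. }
  apply hnorm_le_of_hnorm2_le; [apply Rlt_le, one_div_INR_succ_bounds|].
  eapply Rle_trans.
  { apply (resolvent_residual_hsegment A J hmon hJ x y _ e); try lra;
      now apply hnorm2_le_of_hnorm_le. }
  assert (e * (margin / diam2 * hnorm2 (hsub y x)) <= e) by nra.
  assert (e ^ 2 <= e) by nra.
  lra.
Qed.

Lemma descent_step i x :
  in_ball p N x -> hnorm (hsub (J x) x) <= 1 / (INR (M (S i)) + 1) ->
  approx_solution (rate N (M i)) x \/
  exists z, in_ball p N z /\ hnorm (hsub (J z) z) <= 1 / (INR (M i) + 1) /\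
    hnorm2 (hsub x0 z) <= hnorm2 (hsub x0 x) - margin ^ 2 / diam2.
Proof.
  intros Hx Hrx.
  assert (Hw : (f (rate N (M i)) <= M (S i))%nat /\ (rate N (M i) <= M (S i))%nat).
  { simpl. rewrite w_fun_rate. lia. }
  destruct (classic (forall y, in_ball p N y ->
    hnorm (hsub (J y) y) <= 1 / (INR (rate N (M i)) + 1) ->
    hinner (hsub x0 x) (hsub y x) <= margin)) as [Hall|Hnot].
  - left. split; [exact Hx|split; [|exact Hall]].
    eapply Rle_trans; [exact Hrx|]. apply one_div_INR_succ_le. lia.
  - right. apply not_all_ex_not in Hnot as [y Hy].
    apply imply_to_and in Hy as [Hy Hry]. apply imply_to_and in Hry as [Hry Hinner].
    apply Rnot_le_lt in Hinner.
    pose proof step_bounds. pose proof margin_le_diam2.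
    exists (hsegment x y (margin / diam2)). split; [|split].
    + apply hsegment_in_ball; [lra|exact Hx|exact Hy].
    + apply hsegment_residual; [exact Hx|exact Hy| |exact Hry].
      eapply Rle_trans; [exact Hrx|]. apply one_div_INR_succ_le. lia.
    + apply hnorm2_sub_hsegment_descent; [lra|lra|lra|].
      now apply (hnorm2_sub_le_of_in_ball p).
Qed.

Lemma descent i x :
  in_ball p N x -> hnorm (hsub (J x) x) <= 1 / (INR (M (S i)) + 1) ->
  hnorm2 (hsub x0 x) < INR (S i) * (margin ^ 2 / diam2) ->
  exists n z, (n <= rate N (M i))%nat /\ approx_solution n z.
Proof.
  revert x. induction i as [|i IH]; intros x Hx Hrx Hgap.
  - destruct (descent_step 0 x Hx Hrx) as [Hsol|(z & _ & _ & Hdec)].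
    + exists (rate N (M 0)), x. split; [lia|exact Hsol].
    + pose proof (hnorm2_ge0 (hsub x0 z)). simpl INR in Hgap. lra.
  - destruct (descent_step (S i) x Hx Hrx) as [Hsol|(z & Hz & Hrz & Hdec)].
    + exists (rate N (M (S i))), x. split; [lia|exact Hsol].
    + destruct (IH z Hz Hrz) as (n & y & Hn & Hsol); [rewrite S_INR in Hgap; lra|].
      exists n, y. split; [|exact Hsol].
      pose proof (le_w_fun f N (M i) hN0).
      apply (Nat.le_trans _ _ _ Hn). unfold rate.
      apply Nat.mul_le_mono_l, Nat.pow_le_mono_l. simpl. lia.
Qed.

Lemma initial_gap : 2 * hnorm (hsub x0 p) <= INR N ->
  hnorm2 (hsub x0 p) < INR (S (4 * N ^ 4 * (k + 1) ^ 2)) * (margin ^ 2 / diam2).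
Proof.
  intros H. assert (Hhalf : hnorm (hsub x0 p) <= INR N / 2) by lra.
  apply hnorm2_le_of_hnorm_le in Hhalf.
  pose proof INR_N_ge1. pose proof (pos_INR k).
  rewrite S_INR, !mult_INR, !pow_INR, plus_INR.
  replace (INR 4) with 4 by (simpl; lra). simpl (INR 1).
  (* the budget of descents times the decrease per descent is N^2 *)
  replace ((4 * INR N ^ 4 * (INR k + 1) ^ 2 + 1) * ((1 / (INR k + 1)) ^ 2 / (4 * INR N ^ 2)))
    with (INR N ^ 2 + (1 / (INR k + 1)) ^ 2 / (4 * INR N ^ 2)) by (field; split; lra).
  assert (0 < (1 / (INR k + 1)) ^ 2 / (4 * INR N ^ 2)).
  { apply Rdiv_lt_0_compat; [apply pow_lt, Rdiv_lt_0_compat|]; nra. }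
  nra.
Qed.

End Descent.

Theorem mainTheorem3 (X : HilbertSpace) (A : SetOp X) (J : X -> X)
  (hA : maximal_monotone A) (hS : exists q, zeros A q) (hJ : is_resolvent A J)
  (x0 p : X) (N : nat) (hp : zeros A p) (hN0 : (N <> 0)%nat)
  (hN : 2 * hnorm (hsub x0 p) <= INR N)
  (k : nat) (f : nat -> nat) (hf : monotone_fun f) :
  let R0 := (4 * N ^ 4 * (k + 1) ^ 2)%nat in
  exists (n : nat) (x : X),
    (n <= 24 * N * (Nat.iter R0 (w_fun f N) 0%nat + 1) ^ 2)%nat /\
    in_ball p N x /\
    hnorm (hsub (J x) x) <= 1 / (INR (f n) + 1) /\
    (forall y : X, in_ball p N y ->
       hnorm (hsub (J y) y) <= 1 / (INR n + 1) ->
       hinner (hsub x0 x) (hsub y x) <= 1 / (INR k + 1)).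
Proof.
  intros R0. destruct hA as [hmon _].
  assert (Hp : in_ball p N p).
  { apply hnorm_le_of_hnorm2_le; [apply pos_INR|].
    rewrite hnorm2_sub_diag. apply pow2_ge_0. }
  assert (Hrp : hnorm (hsub (J p) p) <= 1 / (INR (Nat.iter (S R0) (w_fun f N) 0%nat) + 1)).
  { rewrite (resolvent_zero_residual A J hmon hJ p hp). apply Rlt_le, one_div_INR_succ_bounds. }
  destruct (descent A J x0 p N k f hmon hJ hN0 R0 p Hp Hrp (initial_gap x0 p N k hN0 hN))
    as (n & x & Hn & Hx & Hrx & Hvar).
  exists n, x. repeat split; assumption.
Qed.
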